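(* Let $C\subseteq\{0,1\}^n$ be shortest-path closed and let $v\in C$ be a corner vertex of $C$. Then $C\setminus\{v\}$ is shortest-path closed.
   Context: For $C\subseteq\{0,1\}^n$, the one-inclusion graph $\Gamma(C)$ has vertex set $C$ and an edge between $u,v$ iff they differ in exactly one coordinate. A $k$-cube in $C$ is a set of $2^k$ points of $C$ agreeing outside some set of $k$ coordinates and taking all $2^k$ values on those coordinates. $C$ is shortest-path closed if for any $u,v\in C$, $\Gamma(C)$ contains a path from $u$ to $v$ of length $\|u-v\|_1$ (the Hamming distance). A vertex $v\in C$ is a corner vertex of $C$ if among all cubes contained in $C$ that contain $v$ there is a unique one $Q$ of maximum dimension, and all neighbours of $v$ in $\Gamma(C)$ lie in $Q$. *)

From mathcomp Require Import all_boot.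
Set Implicit Arguments. Unset Strict Implicit. Unset Printing Implicit Defensive.

Definition point (n : nat) := {ffun 'I_n -> bool}.

Definition hamming n (u v : point n) : nat := #|[set i | u i != v i]|.

Definition adj n (u v : point n) : bool := hamming u v == 1.

(* Gamma(C) contains a path from u to v of length ||u-v||_1:
   a sequence of vertices u = x_0, x_1, ..., x_m = v, all in C, consecutive
   ones adjacent, with m = hamming u v. *)
Definition geodesic_in n (C : {set point n}) (u v : point n) : Prop :=
  exists p : seq (point n),
    [/\ path (@adj n) u p, all (fun x => x \in C) p, last u p = v
      & size p = hamming u v].

Definition sp_closed n (C : {set point n}) : Prop :=
  forall u v, u \in C -> v \in C -> geodesic_in C u v.

(* The subcube with free coordinates S through x: all points agreeing with x
   outside S. It has 2^#|S| points and dimension #|S|. *)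
Definition subcube n (S : {set 'I_n}) (x : point n) : {set point n} :=
  [set y : point n | [forall i, (i \notin S) ==> (y i == x i)]].

Definition cube_in n (C : {set point n}) (k : nat) (Q : {set point n}) : Prop :=
  exists S : {set 'I_n}, exists x : point n,
    [/\ #|S| = k, Q = subcube S x & Q \subset C].

Definition corner n (C : {set point n}) (v : point n) : Prop :=
  v \in C /\
  exists Q : {set point n}, exists k : nat,
    [/\ cube_in C k Q, v \in Q,
        (forall Q' k', cube_in C k' Q' -> v \in Q' -> k' <= k),
        (forall Q', cube_in C k Q' -> v \in Q' -> Q' = Q)
      & (forall w, w \in C -> adj v w -> w \in Q)].

From mathcomp Require Import all_boot.
Set Implicit Arguments. Unset Strict Implicit.

(* Only one property of the corner v is needed: its neighbours lie in a subcube
   Q of C through v.  A set is shortest-path closed as soon as from any u towards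
   any w != u there is a neighbour of u in the set that is closer to w.  Take a
   geodesic of C from u to w; if it avoids v its first step works.  Otherwise it
   starts u, v, y with u, y in Q, and the fourth corner u + v + y (mod 2) of the
   square u, v, y lies in Q, differs from v, and is a neighbour of u closer to w. *)

Section Hamming.
Variable n : nat.
Implicit Types u v w x y : point n.

Lemma hammingC u v : hamming u v = hamming v u.
Proof. by apply: eq_card => k; rewrite !inE eq_sym. Qed.

Lemma hammingxx u : hamming u u = 0.
Proof. by apply: eq_card0 => k; rewrite !inE eqxx. Qed.

Lemma hamming_triangle u v w : hamming u w <= hamming u v + hamming v w.
Proof.
rewrite /hamming; apply: leq_trans (leq_card_setU _ _).
apply/subset_leq_card/subsetP => k.
by rewrite !inE; case: (u k); case: (v k); case: (w k).
Qed.

Lemma hamming_last_le u p : path (@adj n) u p -> hamming u (last u p) <= size p.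
Proof.
elim: p u => [|x p IHp] u /=; first by rewrite hammingxx.
case/andP=> /eqP adj_ux /IHp hxp.
by apply: leq_trans (hamming_triangle u x _) _; rewrite adj_ux add1n ltnS.
Qed.

Definition xor3 u v y : point n := [ffun k => u k (+) v k (+) y k].

Lemma hamming_xor3l u v y : hamming u (xor3 u v y) = hamming v y.
Proof.
apply: eq_card => k; rewrite !inE ffunE.
by case: (u k); case: (v k); case: (y k).
Qed.

Lemma hamming_xor3r u v y : hamming (xor3 u v y) y = hamming u v.
Proof.
apply: eq_card => k; rewrite !inE ffunE.
by case: (u k); case: (v k); case: (y k).
Qed.

Lemma xor3_eq_mid u v y : (xor3 u v y == v) = (u == y).
Proof.
apply/eqP/eqP => [/ffunP e | ->]; last by apply/ffunP => k; rewrite ffunE addbC addKb.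
apply/ffunP => k; move: (e k); rewrite ffunE.
by case: (u k); case: (v k); case: (y k).
Qed.

Lemma subcube_xor3 S x u v y :
  u \in subcube S x -> v \in subcube S x -> y \in subcube S x ->
  xor3 u v y \in subcube S x.
Proof.
rewrite !inE => /forallP hu /forallP hv /forallP hy.
apply/forallP => k; apply/implyP => kS; rewrite ffunE.
move: (hu k) (hv k) (hy k); rewrite kS /= => /eqP-> /eqP-> /eqP->.
by rewrite addbK.
Qed.

End Hamming.

Section Descent.
Variables (n : nat) (D : {set point n}).

Definition descent_closed : Prop :=
  forall u w, u \in D -> w \in D -> u != w ->
    exists2 x, x \in D & adj u x && (hamming x w < hamming u w).

Lemma sp_closed_of_descent : descent_closed -> sp_closed D.
Proof.
move=> descD u w; move: {2}(hamming u w) (erefl (hamming u w)) => d.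
elim/ltn_ind: d u => d IHd u huw uD wD.
have [<-|neq_uw] := eqVneq u w; first by exists [::]; rewrite hammingxx.
have [x xD /andP[adj_ux lt_xw]] := descD u w uD wD neq_uw.
have step_xw : (hamming x w).+1 = d.
  apply/eqP; rewrite -huw eqn_leq lt_xw /=.
  by rewrite -add1n -(eqP adj_ux) hamming_triangle.
have [p [path_p all_p last_p size_p]] :=
  IHd (hamming x w) (eq_leq step_xw) x erefl xD wD.
by exists (x :: p); split; rewrite /= ?adj_ux ?xD ?size_p ?step_xw -?huw.
Qed.

End Descent.

Lemma sp_closed_setD1 n (C : {set point n}) (v x0 : point n) (S : {set 'I_n}) :
  sp_closed C -> v \in subcube S x0 -> subcube S x0 \subset C ->
  (forall w, w \in C -> adj v w -> w \in subcube S x0) ->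
  sp_closed (C :\ v).
Proof.
move=> spC vQ QC nbQ; apply: sp_closed_of_descent => u w.
case/setD1P=> _ uC /setD1P[neq_wv wC] neq_uw.
have [[|x p] [/= path_p all_p last_p size_p]] := spC u w uC wC.
  by rewrite last_p eqxx in neq_uw.
case/andP: path_p => adj_ux path_p; case/andP: all_p => xC all_p.
have [eq_xv|neq_xv] := eqVneq x v; last first.
  exists x; first by rewrite !inE neq_xv.
  by rewrite adj_ux -size_p ltnS -last_p hamming_last_le.
subst x; case: p path_p all_p last_p size_p => [|y p] /=.
  by move=> _ _ eq_vw; rewrite eq_vw eqxx in neq_wv.
case/andP=> adj_vy path_p /andP[yC _] last_p size_p.
have le_yw := hamming_last_le path_p; rewrite last_p in le_yw.
have uQ : u \in subcube S x0 by rewrite nbQ // /adj hammingC.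
have neq_uy : u != y.
  by apply: contraTneq le_yw => <-; rewrite -size_p -ltnNge ltnS.
exists (xor3 u v y).
  rewrite !inE xor3_eq_mid neq_uy (subsetP QC) //.
  by rewrite subcube_xor3 // nbQ.
rewrite /adj hamming_xor3l (eqP adj_vy) /= -size_p.
apply: leq_ltn_trans (hamming_triangle _ y _) _.
by rewrite hamming_xor3r (eqP adj_ux) add1n !ltnS.
Qed.

Theorem lemma3 (n : nat) (C : {set point n}) (v : point n) :
  sp_closed C -> corner C v -> sp_closed (C :\ v).
Proof.
move=> spC [_ [Q [k [[S [x0 [_ -> QC]]] vQ _ _ nbQ]]]].
exact: sp_closed_setD1 spC vQ QC nbQ.
Qed.
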